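(* Let $p$ be a probability density on $\mathbb{R}^d$ satisfying a log-Sobolev inequality with constant $C$, and let $q$ be a probability density with $\chi^2(q\|p)<\infty$. Let $\phi=q/p$ and $\psi=\phi/\mathbb{E}_p\phi^2$. Then $$\mathrm{KL}(\psi q\|p)\le\frac{2C}{\chi^2(q\|p)+1}\,\mathcal{E}_p\Big(\frac qp\Big).$$
   Context: Log-Sobolev inequality with constant $C$: $\mathrm{KL}(\mu\|p)\le\frac C2\mathbb{E}_\mu\|\nabla\ln(\mu/p)\|^2$ for all probability densities $\mu$. $\chi^2(q\|p)=\int q^2/p-1=\mathbb{E}_p\phi^2-1$; $\psi q$ is a probability density. Relative Fisher information: $\mathcal{E}_p(q/p):=\int\|\nabla(q/p)\|^2p\,dx$. *)

From HB Require Import structures.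
From mathcomp Require Import all_boot all_order all_algebra.
From mathcomp Require Import all_classical all_reals all_analysis.
Set Implicit Arguments. Unset Strict Implicit. Unset Printing Implicit Defensive.
Import Order.TTheory GRing.Theory Num.Theory.
Import numFieldNormedType.Exports.
Local Open Scope classical_set_scope.
Local Open Scope ring_scope.

(* R^d as row vectors 'rV[R]_d, equipped with its Borel sigma-algebra
   (the sigma-algebra generated by the open sets of its normed topology). *)
Definition Rd (R : realType) (d : nat) :=
  g_sigma_algebraType (@open 'rV[R]_d).

(* lam is Lebesgue measure on the Borel sets of R^d: the measure giving every
   half-open box ]a,b] its volume.  (This determines the measure uniquely.) *)
Definition is_lebesgue_Rd (R : realType) (d : nat)
  (lam : {measure set (Rd R d) -> \bar R}) : Prop :=
  forall a b : 'rV[R]_d, (forall i, a ord0 i <= b ord0 i) ->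
    lam [set x : Rd R d | forall i, a ord0 i < x ord0 i <= b ord0 i]
    = (\prod_(i < d) (b ord0 i - a ord0 i))%:E.

Definition is_density (R : realType) (d : nat)
  (lam : {measure set (Rd R d) -> \bar R}) (f : Rd R d -> R) : Prop :=
  [/\ measurable_fun setT f, (forall x, 0 <= f x) &
      (\int[lam]_x (f x)%:E = 1)%E].

Definition grad (R : realType) (d : nat) (f : 'rV[R]_d -> R) (x : 'rV[R]_d)
  : 'rV[R]_d :=
  \row_(i < d) ('D_(delta_mx ord0 i) f x).

Definition sqnorm (R : realType) (d : nat) (v : 'rV[R]_d) : R :=
  \sum_(i < d) (v ord0 i) ^+ 2.

(* KL(mu || p) = int mu ln (mu/p)   (with 0 ln 0 = 0, as ln 0 = 0 here) *)
Definition KL (R : realType) (d : nat) (lam : {measure set (Rd R d) -> \bar R})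
  (mu p : Rd R d -> R) : \bar R :=
  (\int[lam]_x (mu x * ln (mu x / p x))%:E)%E.

Definition chi2 (R : realType) (d : nat) (lam : {measure set (Rd R d) -> \bar R})
  (q p : Rd R d -> R) : \bar R :=
  (\int[lam]_x ((q x) ^+ 2 / p x)%:E - 1)%E.

Definition Ep_sq (R : realType) (d : nat) (lam : {measure set (Rd R d) -> \bar R})
  (p phi : Rd R d -> R) : \bar R :=
  (\int[lam]_x ((phi x) ^+ 2 * p x)%:E)%E.

Definition fisher (R : realType) (d : nat) (lam : {measure set (Rd R d) -> \bar R})
  (p : Rd R d -> R) (f : 'rV[R]_d -> R) : \bar R :=
  (\int[lam]_x (sqnorm (grad f x) * p x)%:E)%E.

Definition fisher_ln (R : realType) (d : nat) (lam : {measure set (Rd R d) -> \bar R})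
  (mu p : Rd R d -> R) : \bar R :=
  (\int[lam]_x (mu x * sqnorm (grad (fun y : 'rV[R]_d => ln (mu y / p y)) x))%:E)%E.

(* Log-Sobolev inequality with constant C, for all probability densities mu
   (regularity: mu/p differentiable everywhere, so that the gradient exists). *)
Definition LSI (R : realType) (d : nat) (lam : {measure set (Rd R d) -> \bar R})
  (p : Rd R d -> R) (C : R) : Prop :=
  forall mu : Rd R d -> R, is_density lam mu ->
    (forall x : 'rV[R]_d, differentiable (fun y : 'rV[R]_d => mu y / p y) x) ->
    (KL lam mu p <= (C / 2)%:E * fisher_ln lam mu p)%E.

From HB Require Import structures.
From mathcomp Require Import all_boot all_order all_algebra.
From mathcomp Require Import all_classical all_reals all_analysis.
From mathcomp Require Import ring.
Import Order.TTheory GRing.Theory Num.Theory.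
Import numFieldNormedType.Exports.
Local Open Scope classical_set_scope.
Local Open Scope ring_scope.
Import HBNNSimple.

(* Write phi = q/p and s = E_p phi^2 = chi^2(q||p) + 1, so that
   mu := psi q = phi^2 p / s is a probability density with mu/p = phi^2/s.
   Where phi > 0, grad ln(mu/p) = 2 grad phi / phi; where phi = 0, the
   nonnegative phi is minimal, so grad phi = 0.  Either way
   mu ||grad ln(mu/p)||^2 = (4/s) ||grad phi||^2 p, and the log-Sobolev
   inequality for mu gives KL(mu||p) <= (C/2) (4/s) E_p(phi).  No property
   of Lebesgue measure is used. *)

Section ge0_integral_scale.
Context d (T : measurableType d) (R : realType).
Context (mu : {measure set T -> \bar R}).

(* Unlike [ge0_integralZl_EFin], no measurability of [f] is needed: the
   simple functions below [k * f] are [k] times those below [f]. *)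
Lemma ge0_integralZl_le (f : T -> \bar R) (k : R) : 0 < k ->
  (forall x, 0 <= f x)%E ->
  (\int[mu]_x (k%:E * f x) <= k%:E * \int[mu]_x f x)%E.
Proof.
move=> k_gt0 f_ge0.
rewrite ge0_integralTE; last by move=> x; rewrite mule_ge0 // lee_fin ltW.
rewrite ge0_integralTE //; apply: ge_ereal_sup => _ [h /= hkf <-].
have kV_ge0 : 0 <= k^-1 by rewrite invr_ge0 ltW.
pose h' := scale_nnsfun h kV_ge0.
have -> : sintegral mu h = (k%:E * sintegral mu h')%E.
  by rewrite sintegralrM muleA -EFinM divff ?gt_eqF // mul1e.
rewrite lee_pmul2l ?lte_fin //; apply: ereal_sup_ubound; exists h' => //= x.
rewrite mulrC; move: (hkf x) (f_ge0 x); case: (f x) => [r| |] //=.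
- by rewrite -EFinM !lee_fin ler_pdivrMr // mulrC.
- by move=> _ _; rewrite leey.
Qed.

Lemma ge0_integralZl_gt0 (f : T -> \bar R) (k : R) : 0 < k ->
  (forall x, 0 <= f x)%E ->
  (\int[mu]_x (k%:E * f x) = k%:E * \int[mu]_x f x)%E.
Proof.
move=> k_gt0 f_ge0; apply/eqP; rewrite eq_le ge0_integralZl_le //=.
have kV_gt0 : 0 < k^-1 by rewrite invr_gt0.
have kf_ge0 x : (0 <= k%:E * f x)%E by rewrite mule_ge0 // lee_fin ltW.
have := ge0_integralZl_le _ _ kV_gt0 kf_ge0.
under eq_integral do rewrite muleA -EFinM mulVf ?gt_eqF // mul1e.
move=> le_f_kVkf; rewrite -(@lee_pmul2l _ (k^-1)%:E) ?lte_fin ?ltNye ?ltry //.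
by rewrite muleA -EFinM mulVf ?gt_eqF // mul1e.
Qed.

End ge0_integral_scale.

Section directional_derivative.
Context {R : realType} {V : normedModType R}.
Implicit Types (F : V -> R) (x v : V).

Lemma derive_along_line F x v :
  'D_v F x = 'D_1 (fun h : R => F (h *: v + x)) 0.
Proof.
rewrite /derive; set g1 := fun h => h^-1 *: _; set g2 := fun h => h^-1 *: _.
suff -> : g1 = g2 by [].
by rewrite funeqE /g1 /g2 => h /=; rewrite addr0 scale0r add0r [_%:A]mulr1.
Qed.

Lemma derive_at_min F x v : (forall y, differentiable F y) ->
  (forall y, F x <= F y) -> 'D_v F x = 0.
Proof.
move=> dF Fmin; rewrite derive_along_line.
have [_ ->] // : is_derive (0 : R) 1 (fun h : R => F (h *: v + x)) 0.
apply: (@derive1_at_min _ _ (-1) 1) => [|t _||t _].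
- exact: le_trans (lerN10 R) ler01.
- by apply/derivable1_diffP/(differentiable_comp (g := F)).
- by rewrite in_itv/= ltrN10 ltr01.
- by rewrite scale0r add0r.
Qed.

Lemma derive_ln F x v : differentiable F x -> 0 < F x ->
  'D_v (@ln R \o F) x = 'D_v F x / F x.
Proof.
move=> dF Fx_gt0; rewrite !derive_along_line -!derive1E.
have dln := is_derive1_ln Fx_gt0.
rewrite (derive1_comp (g := @ln R)) /= ?scale0r ?add0r.
- by rewrite derive1E derive_val mulrC.
- exact/(derivable1P F x v)/diff_derivable.
- by case: dln.
Qed.

Lemma derive_ln_sqr_div F x v (s : R) : differentiable F x -> F x != 0 ->
  0 < s -> 'D_v (fun y => ln (F y ^+ 2 / s)) x = 2 * 'D_v F x / F x.
Proof.
move=> dF Fx_neq0 s_gt0.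
have -> : (fun y => ln (F y ^+ 2 / s)) = @ln R \o (s^-1 \o* F ^+ 2).
  by apply/funext => y /=; rewrite exprfctE.
rewrite derive_ln /=.
- rewrite deriveMr ?deriveX /=.
  + rewrite exprfctE expr1 -[_ *: _]/(_ * _).
    by field; rewrite Fx_neq0 gt_eqF.
  + exact: diff_derivable.
  + exact/derivableX/diff_derivable.
- exact: differentiableM (differentiableX 1 dF) (differentiable_cst _ _).
- by rewrite divr_gt0 // exprfctE exprn_even_gt0 //.
Qed.

End directional_derivative.

Lemma sqr_div_mul_sqnorm_grad_ln (R : realType) n (F : 'rV[R]_n -> R) s x :
  (forall y, differentiable F y) -> (forall y, 0 <= F y) -> 0 < s ->
  F x ^+ 2 / s * sqnorm (grad (fun y => ln (F y ^+ 2 / s)) x)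
  = 4 / s * sqnorm (grad F x).
Proof.
move=> dF F_ge0 s_gt0; rewrite /sqnorm !mulr_sumr; apply: eq_bigr => i _.
rewrite !mxE; have [Fx0|Fx_neq0] := eqVneq (F x) 0.
  rewrite (derive_at_min _ _ _ dF) => [|y]; last by rewrite Fx0.
  by rewrite Fx0 expr0n /= !(mul0r, mulr0, expr0n).
by rewrite derive_ln_sqr_div //; field; rewrite Fx_neq0 gt_eqF.
Qed.

Lemma measurable_funV_gt0 d (T : measurableType d) (R : realType) (f : T -> R) :
  measurable_fun setT f -> (forall x, 0 < f x) ->
  measurable_fun setT (fun x => (f x)^-1).
Proof.
move=> mf f_gt0; change (measurable_fun setT (GRing.inv \o f)).
apply: (measurable_comp (F := `]0, +oo[%classic : set R)) => //.
- by move=> _ [x _ <-]; rewrite /= in_itv /= andbT.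
- apply: measurable_realfun.open_continuous_measurable_fun.
    exact: rray_open.
  move=> x; rewrite inE /= in_itv /= andbT => x_gt0.
  by apply: inv_continuous; rewrite gt_eqF.
Qed.

Section chi2_tilt.
Variables (R : realType) (d : nat) (lam : {measure set (Rd R d) -> \bar R}).
Variables (p : Rd R d -> R) (phi : 'rV[R]_d -> R) (s : R).
Hypotheses (p_gt0 : forall x, 0 < p x) (s_gt0 : 0 < s).

Lemma is_density_tilt : measurable_fun setT p ->
  measurable_fun setT (phi : Rd R d -> R) -> Ep_sq lam p phi = s%:E ->
  is_density lam (fun x => phi x ^+ 2 / s * p x).
Proof.
move=> mp mphi Ep_sqE; split.
- apply: measurable_realfun.measurable_funM => //.
  apply: measurable_realfun.measurable_funM => //.
  exact: measurable_realfun.measurable_funX.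
- by move=> x; rewrite mulr_ge0 ?divr_ge0 ?sqr_ge0 ?ltW.
- under eq_integral do rewrite mulrAC mulrC EFinM.
  rewrite ge0_integralZl_gt0 ?invr_gt0 //.
    by rewrite -/(Ep_sq _ _ _) Ep_sqE -EFinM mulVf ?gt_eqF.
  by move=> x; rewrite lee_fin mulr_ge0 ?sqr_ge0 ?ltW.
Qed.

Lemma fisher_ln_tilt :
  (forall y, differentiable phi y) -> (forall y, 0 <= phi y) ->
  (fisher_ln lam (fun x => (phi x ^+ 2 / s * p x)%R) p
   = (4 / s)%:E * fisher lam p phi)%E.
Proof.
move=> dphi phi_ge0; rewrite /fisher_ln /fisher -ge0_integralZl_gt0 ?divr_gt0 //;
  last by move=> x; rewrite lee_fin mulr_ge0 ?sumr_ge0 // => *; rewrite ?sqr_ge0 ?ltW.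
apply: eq_integral => x _; rewrite -EFinM; congr EFin.
have -> : (fun y => ln (phi y ^+ 2 / s * p y / p y))
          = (fun y => ln (phi y ^+ 2 / s)).
  by apply/funext => y; rewrite mulfK ?gt_eqF.
by rewrite mulrAC sqr_div_mul_sqnorm_grad_ln // mulrA.
Qed.

Lemma KL_tilt_le (C : R) : LSI lam p C -> 0 < C ->
  measurable_fun setT p -> measurable_fun setT (phi : Rd R d -> R) ->
  Ep_sq lam p phi = s%:E ->
  (forall y, differentiable phi y) -> (forall y, 0 <= phi y) ->
  (KL lam (fun x => (phi x ^+ 2 / s * p x)%R) p
   <= (2 * C / s)%:E * fisher lam p phi)%E.
Proof.
move=> lsi C_gt0 mp mphi Ep_sqE dphi phi_ge0.
have dmu x : differentiable (fun y => phi y ^+ 2 / s * p y / p y) x.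
  have -> : (fun y => phi y ^+ 2 / s * p y / p y) = fun y => phi y ^+ 2 / s.
    by apply/funext => y; rewrite mulfK ?gt_eqF.
  exact: differentiableM (differentiableX 1 (dphi x)) (differentiable_cst _ _).
apply: le_trans (lsi _ (is_density_tilt mp mphi Ep_sqE) dmu) _.
rewrite fisher_ln_tilt // muleA -EFinM.
by have -> : C / 2 * (4 / s) = 2 * C / s by field; rewrite gt_eqF.
Qed.

End chi2_tilt.

Theorem lemma8 (R : realType) (d : nat) (lam : {measure set (Rd R d) -> \bar R})
  (p q : Rd R d -> R) (C : R) :
  is_lebesgue_Rd lam ->
  is_density lam p -> (forall x, 0 < p x) ->
  0 < C -> LSI lam p C ->
  is_density lam q ->
  (chi2 lam q p < +oo)%E ->
  (forall x : 'rV[R]_d, differentiable (fun y : 'rV[R]_d => q y / p y) x) ->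
  let phi := fun x : Rd R d => q x / p x in
  let psi := fun x : Rd R d => phi x / fine (Ep_sq lam p phi) in
  (KL lam (fun x => (psi x * q x)%R) p
    <= (2 * C / (fine (chi2 lam q p) + 1))%:E
       * fisher lam p (fun y : 'rV[R]_d => (q y / p y)%R))%E.
Proof.
move=> _ [mp _ _] p_gt0 C_gt0 lsi [mq q_ge0 _] chi2_fin dphi; cbv zeta.
set phi := fun x : Rd R d => q x / p x.
have phi_ge0 x : 0 <= phi x by rewrite divr_ge0 // ltW.
have mphi : measurable_fun setT phi.
  by apply: measurable_realfun.measurable_funM => //; exact: measurable_funV_gt0.
have chi2E : chi2 lam q p = (Ep_sq lam p phi - 1)%E.
  congr (_ - _)%E; apply: eq_integral => x _; congr EFin.
  by rewrite /phi; field; rewrite gt_eqF.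
have Ep_sq_ge0 : (0 <= Ep_sq lam p phi)%E.
  by apply: integral_ge0 => x _; rewrite lee_fin mulr_ge0 ?sqr_ge0 ?ltW.
have [s Ep_sqE] : exists s, Ep_sq lam p phi = s%:E.
  move: Ep_sq_ge0 chi2_fin; rewrite chi2E.
  by case: (Ep_sq _ _ _) => [r| |] //; exists r.
rewrite chi2E Ep_sqE /= subrK.
have /predU1P[<-|s_gt0] : (0 == s) || (0 < s).
  by rewrite -le_eqVlt -lee_fin -Ep_sqE.
  (* Junk case: psi = phi / 0 = 0, and the constant 2 C / 0 is 0 as well. *)
  rewrite invr0 mulr0 mul0e /KL integral0_eq // => x _.
  by rewrite !(mulr0, mul0r).
have -> : (fun x => phi x / s * q x) = (fun x => phi x ^+ 2 / s * p x).
  by apply/funext => x; rewrite /phi; field; rewrite !gt_eqF.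
exact: KL_tilt_le.
Qed.
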